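(* Let $r\ge2$, $n\ge2r$, and let $H\subseteq\binom{\Omega_n}{r}$ be $M_1^{(r)}$-saturated. Then: (1) for all $i$, $\rho(v_{i+1})=\lambda(v_i)$; (2) for all distinct $v_i,v_j$, $|[\rho(v_i),\lambda(v_i)]\cap[\rho(v_j),\lambda(v_j)]|\le1$; (3) for every $j$, there is exactly one vertex $v_i$ such that the interval $[\rho(v_i),\lambda(v_i)]$ contains both $v_j$ and $v_{j+1}$; (4) if $\lambda(v_i)\neq\rho(v_i)$, then $\lambda(\rho(v_i))=v_i$ and $\rho(\rho(v_i))\in[\lambda(v_i),v_i)$.
   Context: $\Omega_n=\{v_0,\dots,v_{n-1}\}$ with cyclic order $v_0<\dots<v_{n-1}<v_0$, indices mod $n$. For distinct vertices $u,w$, $(u,w)$ is the set of vertices strictly between $u$ and $w$ moving clockwise from $u$ to $w$; $[u,w]=(u,w)\cup\{u,w\}$, $[u,w)=(u,w)\cup\{u\}$; $[u,u]=\{u\}$. An $r$-cgh $H\subseteq\binom{\Omega_n}{r}$ is $M_1^{(r)}$-saturated if there are no edges $h_1,h_2\in H$ and vertices $u\neq u'$ with $h_1\subseteq[u,u']$ and $h_2\cap[u,u']=\emptyset$, but for every $e\in\binom{\Omega_n}{r}\setminus H$ such a pair exists in $H\cup\{e\}$. In such $H$ every vertex lies in an edge. $\lambda(v_i)$ is the vertex $u$ such that some $h\in H$ with $v_i\in h$ satisfies $h\subseteq[u,v_i]$, while no $h\in H$ with $v_i\in h$ satisfies $h\subseteq[u',v_i]$, $u'$ the clockwise successor of $u$.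 $\rho(v_i)$ is the vertex $u$ such that some $h\in H$ with $v_i\in h$ satisfies $h\subseteq[v_i,u]$ but none with $h\subseteq[v_i,u'']$, $u''$ the clockwise predecessor of $u$. *)

From mathcomp Require Import all_boot.
Set Implicit Arguments. Unset Strict Implicit. Unset Printing Implicit Defensive.

(* Vertices of Omega_n are the ordinals 'I_n, v_i = i, cyclic order 0<1<..<n-1<0. *)
Section Cyclic.
Variable n : nat.

Definition cdist (u x : 'I_n) : nat := (x + n - u) %% n.

(* closed clockwise interval [u,w]; [u,u] = {u} *)
Definition cint (u w : 'I_n) : {set 'I_n} := [set x | cdist u x <= cdist u w].

(* half-open clockwise interval [u,w) = [u,w] \ {w} for u <> w *)
Definition hoint (u w : 'I_n) : {set 'I_n} := [set x | cdist u x < cdist u w].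

Definition uniform (r : nat) (H : {set {set 'I_n}}) : Prop :=
  forall h, h \in H -> #|h| = r.

(* H contains a copy of M_1^{(r)}: h1 in [u,u'], h2 disjoint from [u,u'] *)
Definition has_M1 (H : {set {set 'I_n}}) : Prop :=
  exists h1 h2 u u', [/\ h1 \in H, h2 \in H, u != u',
                        h1 \subset cint u u' & [disjoint h2 & cint u u']].

Definition M1_saturated (r : nat) (H : {set {set 'I_n}}) : Prop :=
  uniform r H /\ ~ has_M1 H /\
  (forall e : {set 'I_n}, #|e| = r -> e \notin H -> has_M1 (e |: H)).

Definition is_lambda (H : {set {set 'I_n}}) (v u : 'I_n) : bool :=
  [exists h in H, (v \in h) && (h \subset cint u v)] &&
  ~~ [exists h in H, (v \in h) && (h \subset cint (ordS u) v)].

Definition is_rho (H : {set {set 'I_n}}) (v u : 'I_n) : bool :=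
  [exists h in H, (v \in h) && (h \subset cint v u)] &&
  ~~ [exists h in H, (v \in h) && (h \subset cint v (ord_pred u))].

(* "the vertex u" with the property (default v if none exists) *)
Definition lam (H : {set {set 'I_n}}) (v : 'I_n) : 'I_n :=
  odflt v [pick u | is_lambda H v u].
Definition rho (H : {set {set 'I_n}}) (v : 'I_n) : 'I_n :=
  odflt v [pick u | is_rho H v u].

End Cyclic.

(* Call a vertex set occupied when it contains an edge of H.  Everything
   rests on a dichotomy: for an arc [a,b] with complement [b+1,a-1], exactly
   one of the two is occupied.  "At most one" is the absence of M_1; "at
   least one" follows from saturation applied to an r-set through both ends
   of whichever arc has at least r vertices (n >= 2r).  Saturation also shows
   that an occupied arc whose interior is free contains an edge through both
   of its ends, which yields the characterizations: lambda(v) = u iff [u,v]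
   is occupied and [u+1,v] is not, and symmetrically for rho.  Consequently
   [a,v] is occupied iff lambda(v) lies in it. *)

From mathcomp Require Import all_boot zify.
Set Implicit Arguments. Unset Strict Implicit. Unset Printing Implicit Defensive.

Section CyclicArithmetic.
Variable n : nat.
Implicit Types a b c p x y : 'I_n.

Lemma cdistE_le a c : a <= c -> cdist a c = c - a.
Proof.
move=> le_ac; rewrite /cdist; have := ltn_ord a; have := ltn_ord c => lt_cn lt_an.
have -> : c + n - a = (c - a) + n by lia.
by rewrite modnDr modn_small; lia.
Qed.

Lemma cdistE_gt a c : c < a -> cdist a c = n + c - a.
Proof. by move=> lt_ca; rewrite /cdist modn_small; have := ltn_ord a; have := ltn_ord c; lia. Qed.

Lemma ordSE_lt x : x.+1 < n -> ordS x = x.+1 :> nat.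
Proof. by move=> lt_xn; rewrite /= modn_small. Qed.

Lemma ordSE_last x : n <= x.+1 -> ordS x = 0 :> nat.
Proof.
move=> le_nx /=; have -> : x.+1 = n by have := ltn_ord x; lia.
by rewrite modnn.
Qed.

Lemma ord_predE_pos x : 0 < x -> ord_pred x = x.-1 :> nat.
Proof.
move=> x_gt0; have := ltn_ord x => lt_xn; rewrite /=.
have -> : (x + n).-1 = x.-1 + n by lia.
by rewrite modnDr modn_small; lia.
Qed.

Lemma ord_predE_0 x : x <= 0 -> ord_pred x = n.-1 :> nat.
Proof. by move=> x0; rewrite /= modn_small; have := ltn_ord x; lia. Qed.

End CyclicArithmetic.

(* [ord_lia] proves a linear statement about cdist, ordS and ord_pred by
   expanding each of them, case by case, into plain arithmetic on the
   underlying natural numbers. *)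
Ltac ord_lia :=
  rewrite ?inE;
  repeat match goal with
  | |- context [cdist ?a ?b] =>
      let h := fresh in
      case: (leqP a b) => h; [move: (cdistE_le h) | move: (cdistE_gt h)]; move: h;
      generalize (cdist a b); intros ?
  end;
  repeat match goal with
  | |- context [nat_of_ord (ordS ?a)] =>
      let h := fresh in
      lazymatch type of a with ordinal ?m => case: (ltnP a.+1 m) => h end;
      [move: (ordSE_lt h) | move: (ordSE_last h)]; move: h;
      generalize (nat_of_ord (ordS a)); intros ?
  | |- context [nat_of_ord (ord_pred ?a)] =>
      let h := fresh in
      case: (posnP a) => h; [move: (ord_predE_0 (eq_leq h)) | move: (ord_predE_pos h)];
      move: h; generalize (nat_of_ord (ord_pred a)); intros ?
  end;
  repeat match goal with |- context [nat_of_ord ?x] =>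
    move: (ltn_ord x); generalize (nat_of_ord x); intros ? end;
  intros; lia.

Section RelativePositions.
Variable n : nat.
Implicit Types a b p x y : 'I_n.

Lemma cdist_rel_le p a b : cdist p a <= cdist p b -> cdist a b = cdist p b - cdist p a.
Proof. ord_lia. Qed.
Lemma cdist_rel_gt p a b : cdist p b < cdist p a -> cdist a b = n + cdist p b - cdist p a.
Proof. ord_lia. Qed.
Lemma cdist_ordS_lt p x : (cdist p x).+1 < n -> cdist p (ordS x) = (cdist p x).+1.
Proof. ord_lia. Qed.
Lemma cdist_ordS_last p x : n <= (cdist p x).+1 -> cdist p (ordS x) = 0.
Proof. ord_lia. Qed.
Lemma cdist_ord_pred_pos p x : 0 < cdist p x -> cdist p (ord_pred x) = (cdist p x).-1.
Proof. ord_lia. Qed.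
Lemma cdist_ord_pred_0 p x : cdist p x <= 0 -> cdist p (ord_pred x) = n.-1.
Proof. ord_lia. Qed.
Lemma cdist_ltn p x : cdist p x < n.
Proof. ord_lia. Qed.
Lemma cdist_eqE p x y : (x == y) = (cdist p x == cdist p y).
Proof. by apply/eqP/eqP=> [->//|e]; apply: val_inj => /=; move: e; ord_lia. Qed.
Lemma cdist_id p : cdist p p = 0.
Proof. ord_lia. Qed.

End RelativePositions.

(* [arc_lia p] proves a linear statement about arcs cint/hoint by expressing
   all positions as clockwise distances from the base point p. *)
Ltac arc_lia p :=
  rewrite ?inE ?(cdist_eqE p);
  repeat match goal with
  | |- context [cdist ?a ?b] =>
      tryif constr_eq a p then fail else
      let h := fresh in
      case: (leqP (cdist p a) (cdist p b)) => h;
        [move: (cdist_rel_le h) | move: (cdist_rel_gt h)]; move: h;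
      generalize (cdist a b); intros ?
  end;
  repeat match goal with
  | |- context [cdist p (ordS ?x)] =>
      let h := fresh in
      lazymatch type of x with ordinal ?m =>
      case: (ltnP (cdist p x).+1 m) => h end;
        [move: (cdist_ordS_lt h) | move: (cdist_ordS_last h)]; move: h;
      generalize (cdist p (ordS x)); intros ?
  | |- context [cdist p (ord_pred ?x)] =>
      let h := fresh in
      case: (posnP (cdist p x)) => h;
        [move: (cdist_ord_pred_0 (eq_leq h)) | move: (cdist_ord_pred_pos h)]; move: h;
      generalize (cdist p (ord_pred x)); intros ?
  end;
  rewrite ?cdist_id;
  repeat match goal with
  | |- context [cdist p ?x] => move: (cdist_ltn p x); generalize (cdist p x); intros ?
  end;
  intros; lia.

Section Arcs.
Variable n : nat.
Implicit Types a b c d i j l p q u v x y z : 'I_n.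

Lemma mem_cint_l a b : a \in cint a b. Proof. arc_lia a. Qed.
Lemma mem_cint_r a b : b \in cint a b. Proof. arc_lia a. Qed.

Lemma cint_id a : cint a a = [set a].
Proof. apply/setP=> x; rewrite !inE; apply/idP/idP; arc_lia a. Qed.

Lemma cint_full a b : ordS b = a -> cint a b = setT.
Proof. move=> e; apply/setP=> x; rewrite !inE; move/eqP: e; arc_lia a. Qed.

Lemma setC_cint a b : ordS b != a -> ~: cint a b = cint (ordS b) (ord_pred a).
Proof. move=> ne; apply/setP=> x; rewrite !inE; apply/idP/idP; move: ne; arc_lia a. Qed.

Lemma cint_sub_cint p q c d : c \notin cint p q -> d \notin cint p q ->
  p \in cint c d -> cint p q \subset cint c d.
Proof. move=> cn dn pin; apply/subsetP=> x; move: cn dn pin; arc_lia p. Qed.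

Lemma cint_sub_setC_cint p q c d : c \notin cint p q -> d \notin cint p q ->
  p \notin cint c d -> cint p q \subset ~: cint c d.
Proof. move=> cn dn pn; apply/subsetP=> x; move: cn dn pn; arc_lia p. Qed.

Lemma mem_cint_ordSl u v x : x \in cint u v -> x != u -> x \in cint (ordS u) v.
Proof. arc_lia u. Qed.

Lemma mem_cint_ord_predr v u x : x \in cint v u -> x != u -> x \in cint v (ord_pred u).
Proof. arc_lia v. Qed.

Lemma cint_ord_pred_subr p u : p != u -> cint p (ord_pred u) \subset cint p u.
Proof. by move=> pu; apply/subsetP=> x; move: pu; arc_lia p. Qed.

Lemma cint_subl l a v : l \in cint a v -> cint l v \subset cint a v.
Proof. by move=> la; apply/subsetP=> x; move: la; arc_lia a. Qed.

Lemma cint_sub_ordSl l a v : l \notin cint a v -> cint a v \subset cint (ordS l) v.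
Proof. by move=> la; apply/subsetP=> x; move: la; arc_lia a. Qed.

Lemma cint_subr l v a : l \in cint v a -> cint v l \subset cint v a.
Proof. by move=> la; apply/subsetP=> x; move: la; arc_lia v. Qed.

Lemma cint_sub_ord_predr l v a : l \notin cint v a -> cint v a \subset cint v (ord_pred l).
Proof. by move=> la; apply/subsetP=> x; move: la; arc_lia v. Qed.

Lemma ordS_neq x : 1 < n -> ordS x != x.
Proof. arc_lia x. Qed.

Lemma mem_cint_ordS p q z : z \in cint p q -> z != q -> ordS z \in cint p q.
Proof. arc_lia p. Qed.

Lemma cdist_ordSl u v : u != v -> cdist (ordS u) v < cdist u v.
Proof. arc_lia v. Qed.

(* The configurations met by the arcs [lambda(i-1), lambda(i)], written for
   an arc [p,q] whose end q lies in [p,i] and differs from i. *)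
Lemma edge_in_cint_ends p q i j : q \in cint p i -> q != i ->
  j \in cint p q -> ordS j \in cint p q ->
  (q \in cint (ordS j) i) && (p \notin cint (ordS j) (ord_pred i)).
Proof. arc_lia p. Qed.

Lemma ends_edge_in_cint p q i j : q \in cint p i -> q != i -> i != j ->
  q \in cint (ordS j) i -> p \notin cint (ordS j) (ord_pred i) ->
  (j \in cint p q) && (ordS j \in cint p q).
Proof. arc_lia p. Qed.

Lemma cint_sub_ord_pred_start p q i : q \in cint p i -> q != p ->
  cint q i \subset cint q (ord_pred p).
Proof. by move=> qin qp; apply/subsetP=> x; move: qin qp; arc_lia p. Qed.

Lemma mem_hoint_split p q i x : q \in cint p i -> q != p -> q != i ->
  x \in cint q (ord_pred p) -> x \notin cint i (ord_pred p) -> x \in hoint q i.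
Proof. arc_lia p. Qed.

Lemma arcs_swap_ends a b c d x y :
  x \in cint a b -> x \in cint c d -> y \in cint a b -> y \in cint c d -> x != y ->
  (x == b) || (x == d) -> (y == b) || (y == d) ->
  (a \in cint c d -> a == d) -> (c \in cint a b -> c == b) -> (a == d) && (c == b).
Proof. arc_lia a. Qed.

Lemma cint_cover a b z : a != b -> (z \in cint a b) && (z != b) || (z \in cint b a) && (z != a).
Proof. arc_lia a. Qed.

End Arcs.

Lemma exists_between_card (T : finType) (B A : {set T}) k :
  B \subset A -> #|B| <= k <= #|A| ->
  exists e : {set T}, [/\ B \subset e, e \subset A & #|e| = k].
Proof.
move=> BA /andP[Bk kA].
have : k - #|B| <= #|A :\: B| by rewrite cardsDS //; lia.
case/card_geqP=> s [uniq_s size_s sub_s].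
exists (B :|: [set x in s]); split; first exact: subsetUl.
- by rewrite subUset BA; apply/subsetP=> x; rewrite inE => /sub_s; rewrite inE => /andP[].
- have disj : [disjoint B & [set x in s]].
    rewrite disjoints_subset; apply/subsetP=> x xB; rewrite !inE.
    by apply/negP=> /sub_s; rewrite inE xB.
  by rewrite cardsU (disjoint_setI0 disj) cards0 subn0 cardsE (card_uniqP uniq_s); lia.
Qed.

Lemma pick_unique (T : finType) (P : pred T) (d x : T) :
  P x -> (forall y, P y -> y = x) -> odflt d [pick y | P y] = x.
Proof. by move=> Px uniq_x; case: pickP => [y /uniq_x|/(_ x)]; rewrite ?Px. Qed.

Section Saturated.
Variables (n r : nat) (H : {set {set 'I_n}}).
Hypotheses (r_ge2 : 2 <= r) (n_ge2r : 2 * r <= n) (satH : M1_saturated r H).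
Implicit Types a b c d i j l p q u v x y z : 'I_n.
Implicit Types e h S : {set 'I_n}.

Definition occupied S : bool := [exists h in H, h \subset S].

Lemma occupiedP S : reflect (exists2 h, h \in H & h \subset S) (occupied S).
Proof. by apply: (iffP exists_inP) => -[h]; exists h. Qed.

Lemma occupied_sub S S' : occupied S -> S \subset S' -> occupied S'.
Proof. by case/occupiedP=> h hH hS SS'; apply/occupiedP; exists h; rewrite ?(subset_trans hS). Qed.

Lemma card_edge h : h \in H -> #|h| = r.
Proof. by case: satH => unif _; apply: unif. Qed.

Lemma occupied_card S : occupied S -> r <= #|S|.
Proof. by case/occupiedP=> h /card_edge <- /subset_leq_card. Qed.

Lemma unoccupied_point a : ~~ occupied (cint a a).
Proof. by apply: contraTN r_ge2 => /occupied_card; rewrite cint_id cards1 -ltnNge. Qed.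

(* Absence of M_1: an occupied arc has an unoccupied complement. *)
Lemma occupied_cint_setC p q : occupied (cint p q) -> ~~ occupied (~: cint p q).
Proof.
case/occupiedP=> h1 h1H sub1; apply/occupiedP=> -[h2 h2H sub2].
have pq : p != q.
  by apply: contraNneq (unoccupied_point p) => pq_eq; apply/occupiedP; exists h1; rewrite // {2}pq_eq.
case: satH => _ [noM1 _]; apply: noM1; exists h1, h2, p, q; split=> //.
by rewrite disjoints_subset.
Qed.

Lemma saturation_arc e : #|e| = r -> e \notin H ->
  exists p q, occupied (cint p q) /\ [disjoint e & cint p q].
Proof.
case: satH => _ [noM1 satur] card_e eH.
have [h1 [h2 [u [u' [h1H h2H uu' sub1 disj2]]]]] := satur e card_e eH.
move: h1H h2H; rewrite !in_setU1 => /orP[/eqP e1|h1H] /orP[/eqP e2|h2H].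
- have [x xe] : exists x, x \in e by apply/card_gt0P; rewrite card_e; lia.
  by move: disj2; rewrite e1 e2 in sub1 *; rewrite disjoints_subset => /subsetP/(_ x xe);
    rewrite inE (subsetP sub1 x xe).
- have occ2 : occupied (~: cint u u').
    by apply/occupiedP; exists h2; rewrite -?disjoints_subset.
  have full : ordS u' != u.
    by apply: contraTneq (occupied_card occ2) => /cint_full ->; rewrite setCT cards0 -ltnNge; lia.
  exists (ordS u'), (ord_pred u); rewrite -setC_cint //; split=> //.
  by rewrite -e1 disjoints_subset setCK.
- by exists u, u'; rewrite -e2; split=> //; apply/occupiedP; exists h1.
- by case: noM1; exists h1, h2, u, u'.
Qed.

(* Saturation applied to an r-set through both ends of a long arc [c,d]:
   either an edge passes through c and d inside [c,d], or the interior of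
   [c,d] is occupied, or the complement of [c,d] is occupied. *)
Lemma arc_alternatives c d : r <= #|cint c d| ->
  [\/ exists2 e, e \in H & [&& c \in e, d \in e & e \subset cint c d],
      occupied (cint c d :\: [set c; d]) | occupied (~: cint c d)].
Proof.
move=> large.
have [e [ends_e e_sub card_e]] :
    exists e, [/\ [set c; d] \subset e, e \subset cint c d & #|e| = r].
  apply: exists_between_card; first by rewrite subUset !sub1set mem_cint_l mem_cint_r.
  by rewrite large andbT cards2; case: (_ != _); lia.
have [ce de] : c \in e /\ d \in e by move: ends_e; rewrite subUset !sub1set => /andP[].
case: (boolP (e \in H)) => eH; first by apply: Or31; exists e; rewrite ?ce ?de.
have [p [q [occ disj]]] := saturation_arc card_e eH.
have [cn dn] : c \notin cint p q /\ d \notin cint p q.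
  by move: disj; rewrite disjoints_subset => /subsetP sub; rewrite -!in_setC !sub.
case: (boolP (p \in cint c d)) => pin.
- apply: Or32; apply: occupied_sub occ _; apply/subsetP=> x xpq.
  rewrite in_setD in_set2 (subsetP (cint_sub_cint cn dn pin) x xpq) andbT.
  by apply/norP; split; [apply: contraNneq cn | apply: contraNneq dn] => <-.
- by apply: Or33; apply: occupied_sub occ (cint_sub_setC_cint cn dn pin).
Qed.

Lemma occupied_large_cint c d :
  r <= #|cint c d| -> occupied (cint c d) || occupied (~: cint c d).
Proof.
case/arc_alternatives=> [[e eH /and3P[_ _ sub]] | occ | ->]; last by rewrite orbT.
- by apply/orP; left; apply/occupiedP; exists e.
- by rewrite (occupied_sub occ) // subsetDl.
Qed.

(* Dichotomy (this is where n >= 2r is used): of an arc [a,b] and its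
   complement arc [b+1,a-1], exactly one is occupied. *)
Lemma dichotomy a b :
  ordS b != a -> occupied (cint a b) = ~~ occupied (cint (ordS b) (ord_pred a)).
Proof.
move=> ne; rewrite -setC_cint //.
case: (boolP (occupied (cint a b))) => [occ|unocc]; first by rewrite occupied_cint_setC.
have := cardsC (cint a b); rewrite card_ord => sum_n.
case: (leqP r #|cint a b|) => large.
  by case/orP: (occupied_large_cint large) => [occ|-> //]; rewrite occ in unocc.
have : r <= #|cint (ordS b) (ord_pred a)| by rewrite -setC_cint //; lia.
case/occupied_large_cint/orP; first by rewrite -setC_cint // => ->.
by rewrite -setC_cint // setCK => occ; rewrite occ in unocc.
Qed.

Lemma edge_through_ends a b :
  occupied (cint a b) -> ~~ occupied (cint a b :\: [set a; b]) ->
  exists2 e, e \in H & [&& a \in e, b \in e & e \subset cint a b].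
Proof.
move=> occ interior; case/arc_alternatives: (occupied_card occ) => // [int|compl].
- by rewrite int in interior.
- by have := occupied_cint_setC occ; rewrite compl.
Qed.

(* lambda(v) is the u for which [u,v] is occupied but [u+1,v] is not: the
   occupied arc then also contains an edge through v. *)
Lemma lam_char v u :
  occupied (cint u v) -> ~~ occupied (cint (ordS u) v) -> lam H v = u.
Proof.
move=> occ unocc.
have [e eH /and3P[_ ve e_sub]] : exists2 e, e \in H & [&& u \in e, v \in e & e \subset cint u v].
  apply: edge_through_ends occ _; apply: contra unocc => int.
  apply: occupied_sub int _; apply/subsetP=> x.
  by rewrite in_setD in_set2 negb_or => /andP[/andP[xu _] xin]; apply: mem_cint_ordSl xin xu.
apply: pick_unique => [|u' /andP[/exists_inP[h' h'H /andP[_ sub']] /exists_inP none']].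
  apply/andP; split; first by apply/exists_inP; exists e; rewrite ?ve.
  by apply: contra unocc => /exists_inP[h hH /andP[_ sub]]; apply/occupiedP; exists h.
case: (eqVneq u' u) => // u'u; case: (boolP (u' \in cint u v)) => u'in.
- case/negP: unocc; apply/occupiedP; exists h' => //.
  exact: subset_trans sub' (cint_subl (mem_cint_ordSl u'in u'u)).
- by case: none'; exists e; rewrite ?ve //= (subset_trans e_sub (cint_sub_ordSl u'in)).
Qed.

Lemma rho_char v u :
  occupied (cint v u) -> ~~ occupied (cint v (ord_pred u)) -> rho H v = u.
Proof.
move=> occ unocc.
have [e eH /and3P[ve _ e_sub]] : exists2 e, e \in H & [&& v \in e, u \in e & e \subset cint v u].
  apply: edge_through_ends occ _; apply: contra unocc => int.
  apply: occupied_sub int _; apply/subsetP=> x.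
  by rewrite in_setD in_set2 negb_or => /andP[/andP[_ xu] xin]; apply: mem_cint_ord_predr xin xu.
apply: pick_unique => [|u' /andP[/exists_inP[h' h'H /andP[_ sub']] /exists_inP none']].
  apply/andP; split; first by apply/exists_inP; exists e; rewrite ?ve.
  by apply: contra unocc => /exists_inP[h hH /andP[_ sub]]; apply/occupiedP; exists h.
case: (eqVneq u' u) => // u'u; case: (boolP (u' \in cint v u)) => u'in.
- case/negP: unocc; apply/occupiedP; exists h' => //.
  exact: subset_trans sub' (cint_subr (mem_cint_ord_predr u'in u'u)).
- by case: none'; exists e; rewrite ?ve //= (subset_trans e_sub (cint_sub_ord_predr u'in)).
Qed.

(* Such a u exists: take the closest u before v with [u,v] occupied (the
   whole circle [v+1,v] is occupied, as H is not empty). *)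
Lemma lam_exists v : exists u, occupied (cint u v) && ~~ occupied (cint (ordS u) v).
Proof.
have occ_full : occupied (cint (ordS v) v).
  have large : r <= #|cint (ordS v) v| by rewrite cint_full // cardsT card_ord; lia.
  case/orP: (occupied_large_cint large) => //.
  by rewrite cint_full // setCT => /occupied_card; rewrite cards0; lia.
have [u occ_u min_u] := arg_minnP (P := fun u => occupied (cint u v)) (fun u => cdist u v) occ_full.
exists u; rewrite occ_u /=; apply/negP => occ_S.
have uv : u != v by apply: contraTneq occ_u => ->; apply: unoccupied_point.
by have := min_u _ occ_S; rewrite leqNgt cdist_ordSl.
Qed.

Lemma lam_spec v : occupied (cint (lam H v) v) && ~~ occupied (cint (ordS (lam H v)) v).
Proof. by have [u /andP[occ unocc]] := lam_exists v; rewrite (lam_char occ unocc) occ unocc. Qed.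

Lemma occupied_cint_lam a v : occupied (cint a v) = (lam H v \in cint a v).
Proof.
have /andP[occ unocc] := lam_spec v.
case: (boolP (lam H v \in cint a v)) => lin; first exact: occupied_sub occ (cint_subl lin).
by apply/negbTE; apply: contra unocc => occ'; apply: occupied_sub occ' (cint_sub_ordSl lin).
Qed.

Lemma lam_neq v : lam H v != v.
Proof. by apply: contraTneq (lam_spec v) => ->; rewrite (negbTE (unoccupied_point v)). Qed.

Lemma lam_neq_ordS v : lam H v != ordS v.
Proof.
have n_gt1 : 1 < n by lia.
apply: contraTneq (lam_spec v) => ->.
rewrite (dichotomy (a := ordS (ordS v))) ?ordSK ?unoccupied_point ?andbF //.
by rewrite eq_sym ordS_neq.
Qed.

Lemma lam_pred_neq i : lam H (ord_pred i) != i.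
Proof. by have := lam_neq_ordS (ord_pred i); rewrite ord_predK. Qed.

Lemma lam_spec_ordS v :
  occupied (cint (ordS v) (lam H v)) && ~~ occupied (cint (ordS v) (ord_pred (lam H v))).
Proof.
have /andP[occ unocc] := lam_spec v.
rewrite dichotomy ?ordSK ?unocc; last by rewrite (inj_eq (@ordS_inj n)) lam_neq.
by rewrite dichotomy ord_predK ?ordSK ?negbK // lam_neq_ordS.
Qed.

Lemma rho_ordS v : rho H (ordS v) = lam H v.
Proof. by case/andP: (lam_spec_ordS v); apply: rho_char. Qed.

Lemma rho_lam_pred i : rho H i = lam H (ord_pred i).
Proof. by rewrite -{1}(ord_predK i) rho_ordS. Qed.

(* From now on the arc of i is [rho(i),lambda(i)] = [lambda(i-1),lambda(i)];
   lambda(i) lies in [lambda(i-1), i]. *)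
Lemma lam_mono i : lam H i \in cint (lam H (ord_pred i)) i.
Proof.
rewrite -occupied_cint_lam; case/andP: (lam_spec (ord_pred i)) => occ _.
exact: occupied_sub occ (cint_ord_pred_subr (lam_pred_neq i)).
Qed.

Lemma edge_in_arc i j :
  (j \in cint (lam H (ord_pred i)) (lam H i)) && (ordS j \in cint (lam H (ord_pred i)) (lam H i))
  = (lam H j == i).
Proof.
apply/idP/eqP => [/andP[jin jSin] | <-].
- have /andP[q_in p_out] := edge_in_cint_ends (lam_mono i) (lam_neq i) jin jSin.
  by rewrite -rho_ordS; apply: rho_char; rewrite occupied_cint_lam.
- have /andP[occ unocc] := lam_spec_ordS j; rewrite !occupied_cint_lam in occ unocc.
  exact: ends_edge_in_cint (lam_mono _) (lam_neq _) (lam_neq j) occ unocc.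
Qed.

Lemma lam_arc_point i z : z \in cint (lam H (ord_pred i)) (lam H i) -> z != lam H i ->
  lam H z = i.
Proof. by move=> zin zq; apply/eqP; rewrite -edge_in_arc zin mem_cint_ordS. Qed.

(* A common point other
   than both ends would have lambda equal to both indices; so two common
   points force each arc to start where the other ends, and then the point
   i-1 cannot be placed. *)
Lemma arcs_meet_le1 i j : i != j ->
  #|cint (rho H i) (lam H i) :&: cint (rho H j) (lam H j)| <= 1.
Proof.
move=> ij; rewrite !rho_lam_pred leqNgt.
apply/card_gt1P => -[x [y [/setIP[xi xj] /setIP[yi yj] xy]]].
have common z : z \in cint (lam H (ord_pred i)) (lam H i) ->
    z \in cint (lam H (ord_pred j)) (lam H j) -> (z == lam H i) || (z == lam H j).
  move=> zi zj; apply: contraNT ij; rewrite negb_or => /andP[zqi zqj].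
  by rewrite -(lam_arc_point zi zqi) -(lam_arc_point zj zqj).
have proper k : lam H (ord_pred k) != lam H k ->
    lam H (ord_pred k) \in cint (lam H (ord_pred k)) (lam H k) /\ lam H (lam H (ord_pred k)) = k.
  by move=> pq; split; [apply: mem_cint_l | apply: lam_arc_point (mem_cint_l _ _) pq].
have pqi : lam H (ord_pred i) != lam H i.
  by apply: contraNneq xy => pq; move: xi yi; rewrite pq cint_id !inE => /eqP-> /eqP->.
have pqj : lam H (ord_pred j) != lam H j.
  by apply: contraNneq xy => pq; move: xj yj; rewrite pq cint_id !inE => /eqP-> /eqP->.
have [[pi_i lam_pi] [pj_j lam_pj]] := (proper i pqi, proper j pqj).
have start_i : lam H (ord_pred i) \in cint (lam H (ord_pred j)) (lam H j) ->
    lam H (ord_pred i) == lam H j.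
  move=> pi_j; case/orP: (common _ pi_i pi_j) => // /eqP pq; by rewrite pq eqxx in pqi.
have start_j : lam H (ord_pred j) \in cint (lam H (ord_pred i)) (lam H i) ->
    lam H (ord_pred j) == lam H i.
  move=> pj_i; case/orP: (common _ pj_i pj_j) => // /eqP pq; by rewrite pq eqxx in pqj.
have /andP[/eqP pi_qj /eqP pj_qi] :=
  arcs_swap_ends xi xj yi yj xy (common _ xi xj) (common _ yi yj) start_i start_j.
case/orP: (cint_cover (ord_pred i) pqi) => /andP[zin zq].
- by have := lam_pred_neq i; rewrite (lam_arc_point zin zq) eqxx.
- rewrite -pj_qi pi_qj in zin; rewrite pi_qj in zq.
  by have := lam_neq j; rewrite -pi_qj (lam_arc_point zin zq) eqxx.
Qed.

(* Part (3): the cycle edge {j,j+1} lies in the arc of lambda(j) only. *)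
Lemma edge_unique_arc j : exists! i : 'I_n,
  (j \in cint (rho H i) (lam H i)) /\ (ordS j \in cint (rho H i) (lam H i)).
Proof.
exists (lam H j); split=> [|i]; rewrite rho_lam_pred.
  by apply/andP; rewrite edge_in_arc.
by move=> /andP; rewrite edge_in_arc => /eqP.
Qed.

Lemma rho_rho i : lam H i != rho H i ->
  lam H (rho H i) = i /\ rho H (rho H i) \in hoint (lam H i) i.
Proof.
rewrite rho_lam_pred => qp; split.
  apply: lam_char.
  - rewrite dichotomy; first by case/andP: (lam_spec (ord_pred i)).
    by apply: contraNneq (lam_neq (ord_pred i)) => e; rewrite -[X in _ == ord_pred X]e ordSK.
  - rewrite dichotomy ?ordSK ?negbK ?occupied_cint_lam; last first.
      by rewrite (inj_eq (@ordS_inj n)) lam_pred_neq.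
    by apply: mem_cint_ordSl (lam_mono i) _; rewrite qp.
rewrite rho_lam_pred; apply: (mem_hoint_split (lam_mono i) qp (lam_neq i)).
- rewrite -occupied_cint_lam; case/andP: (lam_spec i) => occ _.
  exact: occupied_sub occ (cint_sub_ord_pred_start (lam_mono i) qp).
- rewrite -occupied_cint_lam dichotomy ?ord_predK ?negbK; last by rewrite ?ord_predK lam_pred_neq.
  by case/andP: (lam_spec (ord_pred i)).
Qed.

End Saturated.

Theorem proposition3p5 (r n : nat) (H : {set {set 'I_n}}) :
  2 <= r -> 2 * r <= n -> M1_saturated r H ->
  [/\ (forall i : 'I_n, rho H (ordS i) = lam H i),
      (forall i j : 'I_n, i != j ->
         #|cint (rho H i) (lam H i) :&: cint (rho H j) (lam H j)| <= 1),
      (forall j : 'I_n, exists! i : 'I_n,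
         (j \in cint (rho H i) (lam H i)) /\ (ordS j \in cint (rho H i) (lam H i)))
    & (forall i : 'I_n, lam H i != rho H i ->
         lam H (rho H i) = i /\ rho H (rho H i) \in hoint (lam H i) i)].
Proof.
move=> r_ge2 n_ge2r satH; split.
- exact: rho_ordS r_ge2 n_ge2r satH.
- exact: arcs_meet_le1 r_ge2 n_ge2r satH.
- exact: edge_unique_arc r_ge2 n_ge2r satH.
- exact: rho_rho r_ge2 n_ge2r satH.
Qed.
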